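(* Let $G$ be a connected graph that is not isomorphic to a path. Let $u$ be a pendant vertex of $G$ adjacent to a cut-vertex $v$ with $\deg(v)=2$. Then $u$ is not a basis forced vertex of $G$.
   Context: All graphs are finite and simple. A pendant is a vertex with exactly one neighbour; a cut-vertex is a vertex $v$ such that $G-v$ is disconnected. For vertices $x,y$ of a connected graph $G$, $d(x,y)$ is the length of a shortest $x$–$y$ path. A set $R\subseteq V(G)$ is a resolving set if for all distinct $x,y\in V(G)$ there is $r\in R$ with $d(r,x)\neq d(r,y)$. The metric dimension $\dim(G)$ is the minimum cardinality of a resolving set, and a resolving set of cardinality $\dim(G)$ is a metric basis. A vertex is a basis forced vertex if it belongs to every metric basis of $G$. *)

From mathcomp Require Import all_boot.
Set Implicit Arguments. Unset Strict Implicit. Unset Printing Implicit Defensive.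

Section Graphs.
Variable T : finType.
Implicit Types (e : rel T) (x y u v : T).

Definition simple_graph e : Prop := symmetric e /\ irreflexive e.

Definition connected_graph e : Prop := forall x y, connect e x y.

Definition walk_of_len e x y (n : nat) : bool :=
  [exists p : n.-tuple T, path e x p && (last x p == y)].

(* d(x,y): the length of a shortest x-y walk (= shortest path); in a
   connected graph on #|T| vertices this is < #|T|, so searching
   lengths 0..#|T|-1 suffices. *)
Definition dist e x y : nat :=
  find (walk_of_len e x y) (iota 0 #|T|).

Definition neighbours e x : {set T} := [set y | e x y].
Definition deg e x : nat := #|neighbours e x|.

Definition pendant e u : Prop := deg e u = 1.

Definition del_vertex e v : rel T := [rel a b | [&& e a b, a != v & b != v]].

Definition cut_vertex e v : Prop :=
  exists x y, [/\ x != v, y != v & ~~ connect (del_vertex e v) x y].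

Definition resolving e (R : {set T}) : Prop :=
  forall x y, x != y -> exists2 r, r \in R & dist e r x != dist e r y.

Definition metric_basis e (B : {set T}) : Prop :=
  resolving e B /\ forall S : {set T}, resolving e S -> #|B| <= #|S|.

Definition basis_forced e u : Prop :=
  forall B : {set T}, metric_basis e B -> u \in B.

Definition is_path_graph e : Prop :=
  exists f : T -> nat, [/\ injective f, forall x, f x < #|T| &
    forall x y, e x y = ((f x == (f y).+1) || (f y == (f x).+1))].

End Graphs.

(* Let w be the other neighbour of v.  Every vertex x other than u satisfies
   d(u,x) = d(v,x) + 1, so as a landmark u only matters for telling u itself
   apart from the other vertices.  Landmark v does that for every vertex but w
   (d(v,u) = 1 and the only other neighbour of v is w), and any landmark
   b outside {u,v} does it for w, since d(b,u) = d(b,w) + 2.  Hence a metric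
   basis containing u and some other vertex can be traded for one of no larger
   size avoiding u: replace u by v, or replace {u,v} by {v,w}.  A metric basis
   {u} would make the distances from u injective, which forces G to be a path. *)

From mathcomp Require Import all_boot zify.

Set Implicit Arguments.
Unset Strict Implicit.
Unset Printing Implicit Defensive.

Section Distance.
Variables (T : finType) (e : rel T).
Hypotheses (e_sym : symmetric e) (e_irr : irreflexive e).
Hypothesis conn : connected_graph e.
Implicit Types (x y z w : T) (p : seq T).

Lemma walk_of_lenP x y n :
  reflect (exists2 p, size p = n & path e x p /\ last x p = y)
          (walk_of_len e x y n).
Proof.
apply: (iffP existsP) => [[p /andP[ep /eqP lp]] | [p sz [ep lp]]].
  by exists p; rewrite ?size_tuple.
by subst n; exists (in_tuple p); rewrite ep lp eqxx.
Qed.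

Lemma has_walk_of_len x y : has (walk_of_len e x y) (iota 0 #|T|).
Proof.
have /connectP[p ep ->] := conn x y.
have [q eq uq _] := shortenP ep.
apply/hasP; exists (size q); last by apply/walk_of_lenP; exists q.
rewrite mem_iota add0n -[_ < _]/(size (x :: q) <= _).
by rewrite -(card_uniqP uq) max_card.
Qed.

Lemma dist_lt_card x y : dist e x y < #|T|.
Proof. by rewrite -[X in _ < X](size_iota 0) -has_find has_walk_of_len. Qed.

Lemma shortest_walk x y :
  exists2 p, size p = dist e x y & path e x p /\ last x p = y.
Proof.
apply/walk_of_lenP; have := nth_find 0 (has_walk_of_len x y).
by rewrite nth_iota ?dist_lt_card.
Qed.

Lemma dist_le_size x p : path e x p -> dist e x (last x p) <= size p.
Proof.
move=> ep; rewrite leqNgt; apply/negP => lt.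
have := before_find 0 lt; rewrite nth_iota ?(ltn_trans lt (dist_lt_card _ _)) //.
by rewrite add0n => /negbT/negP; apply; apply/walk_of_lenP; exists p.
Qed.

Lemma dist_edge x y z : e y z -> dist e x z <= (dist e x y).+1.
Proof.
move=> eyz; have [p sz [ep lp]] := shortest_walk x y.
have := @dist_le_size x (rcons p z); rewrite last_rcons size_rcons sz; apply.
by rewrite rcons_path ep lp.
Qed.

Lemma distnn x : dist e x x = 0.
Proof. by apply/eqP; rewrite -leqn0 (@dist_le_size x [::]). Qed.

Lemma dist_eq0 x y : (dist e x y == 0) = (x == y).
Proof.
apply/eqP/eqP => [d0 | ->]; last exact: distnn.
by have [[|a p] /= sz [_ <-]] := shortest_walk x y; rewrite d0 in sz.
Qed.

Lemma dist_eq1 x y : (dist e x y == 1) = e x y.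
Proof.
apply/eqP/idP => [d1 | exy].
  have [p sz [ep lp]] := shortest_walk x y; rewrite d1 in sz.
  by case: p sz ep lp => [|a [|b p]] //= _; rewrite andbT => exa <-.
have := dist_edge x exy; rewrite distnn.
have : dist e x y != 0.
  by rewrite dist_eq0; apply: contraTneq exy => ->; rewrite e_irr.
by case: (dist e x y) => [|[|n]].
Qed.

Lemma dist_pred x y n : dist e x y = n.+1 -> exists2 z, e z y & dist e x z = n.
Proof.
move=> dxy; have [p sz [ep lp]] := shortest_walk x y.
case/lastP: p sz ep lp => [|q a]; first by rewrite dxy.
rewrite size_rcons rcons_path last_rcons dxy => -[sz] /andP[pq ea] ay; subst a.
exists (last x q) => //.
by have := dist_le_size pq; have := dist_edge x ea; rewrite dxy sz; lia.
Qed.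

Lemma walk_of_len_sym x y n : walk_of_len e x y n = walk_of_len e y x n.
Proof.
suff walk_rev x' y' : walk_of_len e x' y' n -> walk_of_len e y' x' n.
  by apply/idP/idP; apply: walk_rev.
case/walk_of_lenP => p sz [ep lp]; apply/walk_of_lenP.
exists (rev (belast x' p)); first by rewrite size_rev size_belast.
split; first by rewrite -lp rev_path (eq_path (e' := e)).
rewrite -lp; case/lastP: p {sz ep lp} => // q a.
by rewrite belast_rcons last_rcons rev_cons last_rcons.
Qed.

Lemma dist_sym x y : dist e x y = dist e y x.
Proof. by apply: eq_find => n; apply: walk_of_len_sym. Qed.

Lemma dist_via_neighbour x y w :
  x != y -> e w y -> (forall z, e z y -> z != w -> dist e x y <= dist e x z) ->
  dist e x y = (dist e x w).+1.
Proof.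
move=> xy ewy far; case dxy: (dist e x y) => [|n].
  by move/eqP: dxy; rewrite dist_eq0 (negbTE xy).
have [z ezy dxz] := dist_pred dxy.
have [zw | zw] := eqVneq z w; first by rewrite -zw dxz.
by have := far z ezy zw; rewrite dxy dxz ltnn.
Qed.

End Distance.

Section Resolving.
Variables (T : finType) (e : rel T).
Hypotheses (e_sym : symmetric e) (e_irr : irreflexive e).
Hypothesis conn : connected_graph e.

Definition resolvingb (R : {set T}) : bool :=
  [forall x, forall y, (x != y) ==> [exists r in R, dist e r x != dist e r y]].

Lemma resolvingP (R : {set T}) : reflect (resolving e R) (resolvingb R).
Proof.
apply: (iffP forallP) => [res x y xy | res x].
  by have /forallP/(_ y)/implyP/(_ xy)/existsP[r /andP[rR d]] := res x; exists r.
apply/forallP => y; apply/implyP => /res[r rR d].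
by apply/existsP; exists r; rewrite rR.
Qed.

Lemma resolving_setT : resolving e [set: T].
Proof. by move=> x y xy; exists x; rewrite ?inE // distnn // eq_sym dist_eq0. Qed.

Lemma exists_metric_basis : exists B : {set T}, metric_basis e B.
Proof.
have resT : resolvingb [set: T] by apply/resolvingP/resolving_setT.
case: (@arg_minnP _ _ resolvingb (fun B => #|B|) resT) => B /resolvingP resB minB; exists B; split => // S /resolvingP; exact: minB.
Qed.

Lemma metric_basis_card_le (B S : {set T}) :
  metric_basis e B -> resolving e S -> #|S| <= #|B| -> metric_basis e S.
Proof. by move=> [_ minB] resS le; split => // S' /minB; apply: leq_trans. Qed.

Lemma resolving_set1_path u : resolving e [set u] -> is_path_graph e.
Proof.
move=> res.
have inj : injective (dist e u).
  move=> x y dxy; apply/eqP; apply: contraT => /res[r].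
  by rewrite inE => /eqP ->; rewrite dxy eqxx.
exists (dist e u); split => // [x | x y]; first exact: dist_lt_card.
apply/idP/orP => [exy | duv]; last first.
  case: duv => /eqP duv; have [z ez /inj zE] := dist_pred conn duv.
    by rewrite -zE e_sym.
  by rewrite -zE.
have : dist e u x != dist e u y by apply: contraTneq exy => /inj ->; rewrite e_irr.
have := dist_edge conn u exy; rewrite e_sym in exy; have := dist_edge conn u exy.
lia.
Qed.

End Resolving.

Lemma pendant_neighbours (T : finType) (e : rel T) u v :
  pendant e u -> e u v -> neighbours e u = [set v].
Proof.
move=> /eqP /cards1P [x Nu] euv.
have : v \in neighbours e u by rewrite inE.
by rewrite Nu inE => /eqP <-.
Qed.

Lemma deg2_neighbours (T : finType) (e : rel T) v u :
  deg e v = 2 -> e v u -> exists2 w, w != u & neighbours e v = [set u; w].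
Proof.
move=> /eqP /cards2P [x [y [xy Nv]]] evu.
have : u \in neighbours e v by rewrite inE.
rewrite Nv !inE => /orP[] /eqP ->; first by exists y; rewrite // eq_sym.
by exists x; rewrite // setUC.
Qed.

Section PendantSwap.
Variables (T : finType) (e : rel T) (u v w : T).
Hypotheses (e_sym : symmetric e) (e_irr : irreflexive e).
Hypothesis conn : connected_graph e.
Hypotheses (nbr_u : neighbours e u = [set v]) (nbr_v : neighbours e v = [set u; w]).
Hypothesis wu : w != u.

Lemma pendant_adjE z : e u z = (z == v).
Proof. by have := congr1 (fun A : {set T} => z \in A) nbr_u; rewrite !inE. Qed.

Lemma support_adjE z : e v z = (z == u) || (z == w).
Proof. by have := congr1 (fun A : {set T} => z \in A) nbr_v; rewrite !inE. Qed.

Lemma support_neq_pendant : v != u.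
Proof.
have : e u v by rewrite pendant_adjE.
by apply: contraTneq => ->; rewrite e_irr.
Qed.

Lemma support_neq_neighbour : w != v.
Proof.
have : e v w by rewrite support_adjE eqxx orbT.
by apply: contraTneq => ->; rewrite e_irr.
Qed.

Lemma dist_to_pendant b : b != u -> dist e b u = (dist e b v).+1.
Proof.
move=> bu; apply: dist_via_neighbour => // [|z]; first by rewrite e_sym pendant_adjE.
by rewrite e_sym pendant_adjE => /eqP ->; rewrite eqxx.
Qed.

Lemma dist_from_pendant x : x != u -> dist e u x = (dist e v x).+1.
Proof. by rewrite !(dist_sym e_sym _ x); apply: dist_to_pendant. Qed.

Lemma dist_to_support b : b != u -> b != v -> dist e b v = (dist e b w).+1.
Proof.
move=> bu bv; apply: dist_via_neighbour => // [|z].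
  by rewrite e_sym support_adjE eqxx orbT.
rewrite e_sym support_adjE => /orP[] /eqP ->; last by rewrite eqxx.
by rewrite dist_to_pendant.
Qed.

Lemma pendant_separated (S : {set T}) b :
  v \in S -> b \in S -> b != u -> b != v ->
  forall y, y != u -> exists2 r, r \in S & dist e r u != dist e r y.
Proof.
move=> vS bS bu bv y yu.
have [-> | yw] := eqVneq y w.
  by exists b; rewrite // dist_to_pendant // dist_to_support //; apply/eqP; lia.
exists v => //.
have /eqP -> : dist e v u == 1 by rewrite dist_eq1 // support_adjE eqxx.
by rewrite eq_sym dist_eq1 // support_adjE (negbTE yu) (negbTE yw).
Qed.

Lemma resolving_swap (R S : {set T}) b :
  resolving e R -> R :\ u \subset S -> u \notin S -> v \in S ->
  b \in S -> b != u -> b != v -> resolving e S.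
Proof.
move=> resR sRS uS vS bS bu bv x y xy.
have [r rR d] := resR x y xy.
have [ru | ru] := eqVneq r u; last first.
  by exists r => //; apply: (subsetP sRS); rewrite !inE ru.
subst r; have [xE | xu] := eqVneq x u.
  by subst x; apply: (pendant_separated vS bS bu bv); rewrite eq_sym.
have [yE | yu] := eqVneq y u.
  subst y; have [r rS d'] := pendant_separated vS bS bu bv xu.
  by exists r; rewrite // eq_sym.
by exists v => //; move: d; rewrite !dist_from_pendant.
Qed.

Lemma pendant_swap (R : {set T}) :
  resolving e R -> u \in R -> 1 < #|R| ->
  exists S : {set T}, [/\ resolving e S, u \notin S & #|S| <= #|R|].
Proof.
move=> resR uR R_gt1.
suff : exists2 a, a != u &
    exists2 b, b \in a |: R :\ u & [/\ b != u, b != v & v \in a |: R :\ u].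
  move=> [a au [b bS [bu bv vS]]].
  have uS : u \notin a |: R :\ u by rewrite !inE eqxx /= orbF eq_sym.
  exists (a |: R :\ u); split => //.
    exact: resolving_swap resR (subsetUr _ _) uS vS bS bu bv.
  by rewrite cardsU1 (cardsD1 u R) uR leq_add ?leq_b1.
case: (boolP [exists b in R, (b != u) && (b != v)]) => [|R_uv].
  case/exists_inP => b bR /andP[bu bv].
  exists v; first exact: support_neq_pendant.
  by exists b; rewrite ?setU11 // !inE bu bR orbT.
have vR : v \in R.
  apply: contraTT R_gt1 => vR; rewrite -leqNgt -(cards1 u).
  apply/subset_leq_card/subsetP => x xR; rewrite inE.
  have /exists_inPn /(_ x xR) := R_uv.
  by rewrite negb_and !negbK => /orP[] // /eqP xv; rewrite -xv xR in vR.
exists w => //; exists w; rewrite ?setU11 ?support_neq_neighbour //.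
by rewrite !inE vR support_neq_pendant orbT.
Qed.

End PendantSwap.

Theorem theorem4 (T : finType) (e : rel T) (u v : T) :
  simple_graph e -> connected_graph e -> ~ is_path_graph e ->
  pendant e u -> e u v -> cut_vertex e v -> deg e v = 2 ->
  ~ basis_forced e u.
Proof.
move=> [e_sym e_irr] conn not_path pend_u euv _ deg_v forced.
have nbr_u := pendant_neighbours pend_u euv.
have [w wu nbr_v] : exists2 w, w != u & neighbours e v = [set u; w].
  by apply: deg2_neighbours; rewrite // e_sym.
have [B basisB] := exists_metric_basis conn.
have uB := forced B basisB.
have [B_le1 | B_gt1] := leqP #|B| 1.
  apply: not_path; apply: (resolving_set1_path e_sym e_irr conn (u := u)).
  suff <- : B = [set u] by case: basisB.
  by apply/eqP; rewrite eq_sym eqEcard sub1set uB cards1.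
have [S [resS uS le_SB]] :=
  pendant_swap e_sym e_irr conn nbr_u nbr_v wu basisB.1 uB B_gt1.
by move: (forced S (metric_basis_card_le basisB resS le_SB)); rewrite (negbTE uS).
Qed.
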